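(* Let $R$ be a commutative noetherian local ring containing $\mathbf{Z}_p$ as a subring, let $A=R/pR$ with maximal ideal $\mathfrak{m}$, and let $(n_i(A))_{i\ge1}$ be the non-decreasing sequence of integers in which each integer $k\ge0$ occurs exactly $\dim_{A/\mathfrak{m}}\mathfrak{m}^k/\mathfrak{m}^{k+1}$ times. Let $r_1,\dots,r_s\in R$ and let $\phi_1,\dots,\phi_s:R\to\mathbf{Z}_p$ be ring homomorphisms. Then the determinant of the $s\times s$ matrix $(\phi_i(r_j))$ is divisible by $p^{A(s)}$, where $A(s)=n_1(A)+n_2(A)+\dots+n_s(A)$. *)

From HB Require Import structures.
From mathcomp Require Import all_boot all_algebra.
From mathcomp Require Import boolp.

Set Implicit Arguments.
Unset Strict Implicit.
Unset Printing Implicit Defensive.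

Import GRing.Theory Num.Theory.
Local Open Scope ring_scope.

(* The ring Z_p of p-adic integers, built as the inverse limit of Z/p^n Z:    *)
(* an element is a sequence x : nat -> int with x n = x (n+1) mod p^n, which  *)
(* forces 0 <= x n < p^n (canonical residues) and compatibility.              *)
(* As for 'Z_p in MathComp, the modulus used is maxn p 2, so that Zpadic p is a   *)
(* genuine nonzero ring for every p; for a prime p (the only case used) the   *)
(* modulus is p itself.                                                       *)

Section PadicIntegers.
Variable p : nat.
Definition zp_base : int := (maxn p 2)%:Z.
Definition zp_mod (n : nat) : int := zp_base ^+ n.

Definition zp_compat (x : nat -> int) : Prop :=
  forall n, x n = modz (x n.+1) (zp_mod n).

Definition Zpadic : Type := {x : nat -> int | zp_compat x}.

HB.instance Definition _ := gen_eqMixin Zpadic.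
HB.instance Definition _ := gen_choiceMixin Zpadic.

Lemma zp_mod_gt0 n : 0 < zp_mod n.
Proof.
rewrite /zp_mod exprn_gt0 // /zp_base ltz_nat.
by apply: leq_trans (leq_maxr p 2).
Qed.

Lemma modz_modM (a d q : int) : modz (modz a (d * q)) d = modz a d.
Proof.
rewrite [in RHS](divz_eq a (d * q)).
by rewrite mulrA mulrAC modzMDl.
Qed.

Lemma zp_mod_succ (a : int) n : modz (modz a (zp_mod n.+1)) (zp_mod n) = modz a (zp_mod n).
Proof. by rewrite /zp_mod exprSr modz_modM. Qed.

Lemma zp_norm (x : Zpadic) n : modz (sval x n) (zp_mod n) = sval x n.
Proof. by rewrite (svalP x n) modz_mod. Qed.

Lemma zp_valP (x : Zpadic) n : sval x n = modz (sval x n.+1) (zp_mod n).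
Proof. exact: (svalP x n). Qed.

Definition zp_lift (f : nat -> int) : nat -> int := fun n => modz (f n) (zp_mod n).

Lemma zp_lift_compat (f : nat -> int) :
  (forall n, modz (f n) (zp_mod n) = modz (f n.+1) (zp_mod n)) -> zp_compat (zp_lift f).
Proof. by move=> hf n; rewrite /zp_lift zp_mod_succ hf. Qed.

Lemma zp_compat0 : zp_compat (fun _ => 0).
Proof. by move=> n; rewrite mod0z. Qed.
Definition zp0 : Zpadic := exist _ _ zp_compat0.

Lemma zp_compat1 : zp_compat (zp_lift (fun _ => 1)).
Proof. exact: zp_lift_compat. Qed.
Definition zp1 : Zpadic := exist _ _ zp_compat1.

Lemma zp_compatD (x y : Zpadic) : zp_compat (zp_lift (fun n => sval x n + sval y n)).
Proof.
apply: zp_lift_compat => n.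
by rewrite (zp_valP x n) (zp_valP y n) modzDml modzDmr.
Qed.
Definition zpD (x y : Zpadic) : Zpadic := exist _ _ (zp_compatD x y).

Lemma zp_compatN (x : Zpadic) : zp_compat (zp_lift (fun n => - sval x n)).
Proof.
apply: zp_lift_compat => n.
by rewrite (zp_valP x n) -modzNm modz_mod modzNm.
Qed.
Definition zpN (x : Zpadic) : Zpadic := exist _ _ (zp_compatN x).

Lemma zp_compatM (x y : Zpadic) : zp_compat (zp_lift (fun n => sval x n * sval y n)).
Proof.
apply: zp_lift_compat => n.
by rewrite (zp_valP x n) (zp_valP y n) modzMml modzMmr.
Qed.
Definition zpM (x y : Zpadic) : Zpadic := exist _ _ (zp_compatM x y).

Lemma zp_eqP (x y : Zpadic) : (forall n, sval x n = sval y n) -> x = y.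
Proof.
move: x y => [x hx] [y hy] /= h.
have exy : x = y by apply: funext.
by subst y; congr exist; apply: Prop_irrelevance.
Qed.

Lemma zpA : associative zpD.
Proof.
move=> x y z; apply: zp_eqP => n /=; rewrite /zp_lift.
by rewrite modzDml modzDmr addrA.
Qed.

Lemma zpC : commutative zpD.
Proof. by move=> x y; apply: zp_eqP => n /=; rewrite /zp_lift addrC. Qed.

Lemma zp0D : left_id zp0 zpD.
Proof. by move=> x; apply: zp_eqP => n /=; rewrite /zp_lift add0r zp_norm. Qed.

Lemma zpND : left_inverse zp0 zpN zpD.
Proof.
move=> x; apply: zp_eqP => n /=; rewrite /zp_lift.
by rewrite modzDml addNr mod0z.
Qed.

HB.instance Definition _ := GRing.isZmodule.Build Zpadic zpA zpC zp0D zpND.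

Lemma zpMA : associative zpM.
Proof.
move=> x y z; apply: zp_eqP => n /=; rewrite /zp_lift.
by rewrite modzMml modzMmr mulrA.
Qed.

Lemma zpMC : commutative zpM.
Proof. by move=> x y; apply: zp_eqP => n /=; rewrite /zp_lift mulrC. Qed.

Lemma zp1M : left_id zp1 zpM.
Proof. by move=> x; apply: zp_eqP => n /=; rewrite /zp_lift modzMml mul1r zp_norm. Qed.

Lemma zpMDl : left_distributive zpM zpD.
Proof.
move=> x y z; apply: zp_eqP => n /=; rewrite /zp_lift.
by rewrite modzMml mulrDl modzDml modzDmr.
Qed.

Lemma zp1_neq0 : zp1 != 0.
Proof.
apply/eqP => /(congr1 (fun x : Zpadic => sval x 1%N)) /=.
rewrite /zp_lift /zp_mod expr1 modz_small //.
rewrite /zp_base ltz_nat /=.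
by apply: leq_trans (leq_maxr p 2).
Qed.

HB.instance Definition _ :=
  GRing.Zmodule_isComNzRing.Build Zpadic zpMA zpMC zp1M zpMDl zp1_neq0.

End PadicIntegers.

Section Ideals.
Variable R : comNzRingType.

Definition is_ideal (I : R -> Prop) : Prop :=
  [/\ I 0, (forall x y, I x -> I y -> I (x + y)) & (forall a x, I x -> I (a * x))].

Definition is_maximal_ideal (M : R -> Prop) : Prop :=
  [/\ is_ideal M, ~ M 1 &
      forall J : R -> Prop, is_ideal J -> ~ J 1 ->
        (forall x, M x -> J x) -> forall x, J x -> M x].

Definition is_local_ring : Prop :=
  exists M : R -> Prop, is_maximal_ideal M /\
    forall M' : R -> Prop, is_maximal_ideal M' -> forall x, M' x <-> M x.

Definition is_noetherian : Prop :=
  forall I : R -> Prop, is_ideal I ->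
    exists (n : nat) (g : 'I_n -> R),
      forall x, I x <-> exists a : 'I_n -> R, x = \sum_(i < n) a i * g i.

Definition ideal_mul (I J : R -> Prop) : R -> Prop :=
  fun x => exists (n : nat) (a b : 'I_n -> R),
    [/\ forall i, I (a i), forall i, J (b i) & x = \sum_(i < n) a i * b i].

Fixpoint ideal_pow (I : R -> Prop) (k : nat) : R -> Prop :=
  match k with
  | 0%N => fun _ => True
  | k'.+1 => ideal_mul I (ideal_pow I k')
  end.

(* For a maximal ideal m of R: the family x : 'I_d -> R of elements of m^k   *)
(* maps to a basis of the (R/m)-vector space m^k/m^(k+1).  (Scalars of R/m   *)
(* are represented by elements a of R, and a is zero in R/m iff a \in m.)    *)
Definition graded_basis (m : R -> Prop) (k d : nat) (x : 'I_d -> R) : Prop :=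
  [/\ forall i, ideal_pow m k (x i),
      forall y, ideal_pow m k y ->
        exists a : 'I_d -> R, ideal_pow m k.+1 (y - \sum_(i < d) a i * x i)
    &
      forall a : 'I_d -> R, ideal_pow m k.+1 (\sum_(i < d) a i * x i) ->
        forall i, m (a i)].

Definition graded_dim (m : R -> Prop) (k d : nat) : Prop :=
  exists x : 'I_d -> R, graded_basis m k x.

End Ideals.

(* The non-decreasing sequence (n_i)_{i>=1} in which each k >= 0 occurs       *)
(* exactly dims k times: its i-th term is k iff                               *)
(*   dims 0 + ... + dims (k-1) < i <= dims 0 + ... + dims k.                   *)
Definition is_nth_term (dims : nat -> nat) (i k : nat) : Prop :=
  (\sum_(j < k) dims j < i <= \sum_(j < k.+1) dims j)%N.

(* Let M be the maximal ideal of R, the preimage of m.  A ring map phi : R -> Z_p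
   followed by reduction mod p is onto F_p, so its kernel is a maximal ideal and
   hence equals M, R being local; therefore phi (M^k) lies in p^k Z_p.
   Take N > n_1 + ... + n_s, lift bases of the m^k/m^(k+1), k < N, to elements
   e_t of M^(deg t), listed by non-decreasing degree, so that deg t = n_(t+1).
   Since the residue field is F_p, every r in R is an integer combination of the
   e_t modulo M^N + pR, and, decomposing the error term again N times, modulo M^N.
   So every column (phi_i (r_j))_i is a Z_p-combination of the vectors
   (phi_i (e_t))_i, divisible by p^(deg t), plus a multiple of p^N.  Expanding
   the determinant multilinearly, each term either contains a column divisible by
   p^N, or repeats a column and vanishes, or involves s distinct e_t, whose degrees
   add up to at least n_1 + ... + n_s. *)

From HB Require Import structures.
From mathcomp Require Import all_boot all_order all_algebra perm boolp.
From mathcomp Require Import ring.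

Set Implicit Arguments.
Unset Strict Implicit.
Unset Printing Implicit Defensive.
Import Order.TTheory GRing.Theory Num.Theory.
Local Open Scope ring_scope.

Section PadicResidue.
Variable p : nat.
Hypothesis p_prime : prime p.
Local Notation Zp := (Zpadic p).

Lemma zp_mod_prime n : zp_mod p n = p%:Z ^+ n.
Proof. by rewrite /zp_mod /zp_base (maxn_idPl (prime_gt1 p_prime)). Qed.

Lemma zp_digit_range (z : Zp) : 0 <= sval z 1 < p%:Z.
Proof.
have p_gt0 : 0 < p%:Z by rewrite ltz_nat prime_gt0.
by rewrite -zp_norm zp_mod_prime expr1 modz_ge0 ?ltz_pmod ?gt_eqF.
Qed.

Lemma zp_val_trunc (z : Zp) n j : sval z n = modz (sval z (n + j)%N) (zp_mod p n).
Proof.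
elim: j => [|j IH]; first by rewrite addn0 zp_norm.
by rewrite IH (zp_valP z (n + j)) addnS /zp_mod exprD modz_modM.
Qed.

Lemma sval_natr k n : sval (k%:R : Zp) n = modz k%:Z (zp_mod p n).
Proof.
elim: k => [|k IH]; first by rewrite mod0z.
by rewrite mulrS /= /zp_lift IH modzDml modzDmr intS.
Qed.

Lemma zp_digit0_dvd (z : Zp) : sval z 1 = 0 -> exists c : Zp, z = p%:R * c.
Proof.
move=> z1; have p_neq0 : p%:Z != 0 by rewrite gt_eqF // ltz_nat prime_gt0.
have z_dvd k : sval z k.+1 = divz (sval z k.+1) p * p.
  have zk : modz (sval z k.+1) p = 0 by rewrite -z1 (zp_val_trunc z 1 k) zp_mod_prime.
  by rewrite {1}(divz_eq (sval z k.+1) p) zk addr0.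
pose c k := divz (sval z k.+1) p.
have c_compat : zp_compat p c.
  move=> k; rewrite /c.
  have -> : sval z k.+1 = modz (divz (sval z k.+2) p) (zp_mod p k) * p.
    by rewrite (zp_valP z k.+1) {1}z_dvd mulz_modl ?ltz_nat ?prime_gt0 // !zp_mod_prime -exprSr.
  by rewrite mulzK.
exists (exist _ c c_compat); apply: zp_eqP => k /=.
rewrite /zp_lift sval_natr modzMml /c zp_mod_prime mulrC -z_dvd.
by rewrite (zp_valP z k) zp_mod_prime.
Qed.

Lemma intr_modz_Fp (k : int) : ((modz k p)%:~R : 'F_p) = k%:~R.
Proof.
rewrite {2}(divz_eq k p) [in RHS]intrD [in RHS]intrM -pmulrn.
by rewrite (pchar_Fp_0 p_prime) mulr0 add0r.
Qed.

Definition zp_residue (z : Zp) : 'F_p := (sval z 1)%:~R.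

Lemma zp_residue_is_zmod_morphism : zmod_morphism zp_residue.
Proof.
move=> x y; rewrite /zp_residue /= /zp_lift zp_mod_prime expr1.
by rewrite intr_modz_Fp [in LHS]intrD intr_modz_Fp intrN.
Qed.

HB.instance Definition _ :=
  GRing.isZmodMorphism.Build Zp 'F_p zp_residue zp_residue_is_zmod_morphism.

Lemma zp_residue_is_monoid_morphism : monoid_morphism zp_residue.
Proof.
split=> [|x y]; rewrite /zp_residue /= /zp_lift zp_mod_prime expr1 intr_modz_Fp //.
exact: intrM.
Qed.

HB.instance Definition _ :=
  GRing.isMonoidMorphism.Build Zp 'F_p zp_residue zp_residue_is_monoid_morphism.

Lemma zp_residue_eq0 (z : Zp) : zp_residue z = 0 -> exists c : Zp, z = p%:R * c.
Proof.
move=> z0; apply: zp_digit0_dvd.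
have /andP[d_ge0 d_ltp] := zp_digit_range z.
move: z0; rewrite /zp_residue -(gez0_abs d_ge0) -pmulrn => /eqP.
rewrite -(dvdn_pcharf (pchar_Fp p_prime)); rewrite -(gez0_abs d_ge0) ltz_nat in d_ltp.
by case: (posnP `|sval z 1|%N) => [-> // | d_gt0]; rewrite gtnNdvd.
Qed.

End PadicResidue.

Lemma big_option (R : Type) (idx : R) (op : R -> R -> R) (I : finType) (F : option I -> R) :
  \big[op/idx]_o F o = op (F None) (\big[op/idx]_t F (Some t)).
Proof.
rewrite ![index_enum _]unlock.
have -> : Finite.enum (option I) = None :: map Some (Finite.enum I).
  by rewrite {1}Finite.enum.unlock.
by rewrite big_cons big_map.
Qed.

Section PowDvd.
Variables (K : comNzRingType) (q : K).

Definition pow_dvd (k : nat) (z : K) : Prop := exists c, z = q ^+ k * c.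

Lemma pow_dvd0 k : pow_dvd k 0.
Proof. by exists 0; rewrite mulr0. Qed.

Lemma pow_dvdD k x y : pow_dvd k x -> pow_dvd k y -> pow_dvd k (x + y).
Proof. by move=> [a ->] [b ->]; exists (a + b); rewrite mulrDr. Qed.

Lemma pow_dvdMl k x y : pow_dvd k y -> pow_dvd k (x * y).
Proof. by move=> [b ->]; exists (x * b); rewrite mulrCA. Qed.

Lemma pow_dvdMr k x y : pow_dvd k x -> pow_dvd k (x * y).
Proof. by rewrite mulrC; apply: pow_dvdMl. Qed.

Lemma pow_dvdM k l x y : pow_dvd k x -> pow_dvd l y -> pow_dvd (k + l) (x * y).
Proof. by move=> [a ->] [b ->]; exists (a * b); rewrite exprD mulrACA. Qed.

Lemma pow_dvd_leq k l x : (k <= l)%N -> pow_dvd l x -> pow_dvd k x.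
Proof.
by move=> le_kl [c ->]; exists (q ^+ (l - k) * c); rewrite mulrA -exprD subnKC.
Qed.

Lemma pow_dvd_sum I (r : seq I) (P : pred I) (F : I -> K) k :
  (forall i, P i -> pow_dvd k (F i)) -> pow_dvd k (\sum_(i <- r | P i) F i).
Proof. by move=> dvdF; apply: big_ind => //; [exact: pow_dvd0 | exact: pow_dvdD]. Qed.

End PowDvd.

Section NondecreasingWeights.
Variable w : nat -> nat.
Hypothesis w_nondecr : {homo w : a b / (a <= b)%N}.

Lemma sum_nondecreasing_sorted a s : sorted ltn s -> all (leq a) s ->
  (\sum_(t < size s) w (a + t) <= \sum_(x <- s) w x)%N.
Proof.
elim: s a => [|x s IH] a /=; first by rewrite big_ord0.
move=> sorted_xs /andP[le_ax le_as]; rewrite big_ord_recl big_cons addn0.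
apply: leq_add; first exact: w_nondecr.
rewrite (eq_bigr (fun i : 'I_(size s) => w (a.+1 + i))) => [|i _]; last by rewrite lift0 addSnnS.
apply: IH; first exact: path_sorted sorted_xs.
by apply/allP => y /(allP (order_path_min ltn_trans sorted_xs)); apply: leq_ltn_trans.
Qed.

(* The [t]-th smallest of [n] distinct naturals is at least [t]. *)
Lemma sum_nondecreasing_inj n (h : 'I_n -> nat) : injective h ->
  (\sum_(t < n) w t <= \sum_(i < n) w (h i))%N.
Proof.
move=> h_inj; set s := sort leq [seq h i | i <- enum 'I_n].
have perm_s : perm_eq s [seq h i | i <- enum 'I_n] by rewrite perm_sort.
have sorted_s : sorted ltn s.
  rewrite ltn_sorted_uniq_leq (perm_uniq perm_s) map_inj_uniq ?enum_uniq //.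
  exact: (sort_sorted leq_total).
have s_ge0 : all (leq 0) s by apply/allP.
have := sum_nondecreasing_sorted sorted_s s_ge0.
by rewrite (perm_size perm_s) (perm_big _ perm_s) size_map size_enum_ord big_map big_enum.
Qed.

End NondecreasingWeights.

Section Determinants.
Variables (K : comNzRingType) (q : K).

Lemma det_sum_rows n (I : finType) (c : 'I_n -> I -> K) (X : 'I_n -> I -> 'rV[K]_n) :
  \det (\matrix_i (\sum_t c i t *: X i t)) =
  \sum_(f : {ffun 'I_n -> I}) (\prod_i c i (f i)) * \det (\matrix_i X i (f i)).
Proof.
have entry i j : (\matrix_i (\sum_t c i t *: X i t)) i j = \sum_t c i t * X i t 0 j.
  by rewrite !mxE summxE; apply: eq_bigr => t _; rewrite mxE.
rewrite [LHS]/determinant.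
under eq_bigr => s _ do rewrite (eq_bigr _ (fun i _ => entry i (s i))) bigA_distr_bigA mulr_sumr.
rewrite exchange_big /=; apply: eq_bigr => f _.
rewrite /determinant mulr_sumr; apply: eq_bigr => s _.
rewrite big_split /= mulrCA; congr (_ * (_ * _)).
by apply: eq_bigr => i _; rewrite mxE.
Qed.

Lemma det_rows_pow_dvd n (A : 'M[K]_n) (a : 'I_n -> nat) :
  (forall i j, pow_dvd q (a i) (A i j)) -> pow_dvd q (\sum_i a i) (\det A).
Proof.
move=> dvdA; have [B defB] := choice (fun ij : 'I_n * 'I_n => dvdA ij.1 ij.2).
exists (\det (\matrix_(i, j) B (i, j))).
have -> : A = diag_mx (\row_i (q ^+ a i)) *m \matrix_(i, j) B (i, j).
  by apply/matrixP => i j; rewrite mul_diag_mx !mxE (defB (i, j)).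
rewrite det_mulmx det_diag; congr (_ * _).
by under eq_bigr do rewrite mxE; rewrite prodrXr.
Qed.

Lemma det_row_pow_dvd n (A : 'M[K]_n) i0 k :
  (forall j, pow_dvd q k (A i0 j)) -> pow_dvd q k (\det A).
Proof.
by move=> dvdA; rewrite (expand_det_row _ i0); apply: pow_dvd_sum => j _; apply: pow_dvdMr.
Qed.

Lemma det_span_pow_dvd (n D N B : nat) (E : 'I_D -> 'rV[K]_n) (w : nat -> nat)
    (g : 'I_n -> 'I_D -> K) (u : 'I_n -> 'rV[K]_n) :
  {homo w : a b / (a <= b)%N} -> (forall (t : 'I_D) j, pow_dvd q (w t) (E t 0 j)) ->
  (B <= \sum_(t < n) w t)%N -> (B <= N)%N ->
  pow_dvd q B (\det (\matrix_j (\sum_t g j t *: E t + q ^+ N *: u j))).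
Proof.
move=> w_nondecr dvdE leB_w leB_N.
pose X j (o : option 'I_D) := if o is Some t then E t else q ^+ N *: u j.
pose c j (o : option 'I_D) := if o is Some t then g j t else 1.
have -> : \matrix_j (\sum_t g j t *: E t + q ^+ N *: u j) = \matrix_j (\sum_o c j o *: X j o).
  by apply/row_matrixP => j; rewrite !rowK big_option scale1r addrC.
rewrite det_sum_rows; apply: pow_dvd_sum => f _; apply: pow_dvdMl.
case: (pickP (fun j => f j == None)) => [j0 /eqP fj0 | f_some].
  apply: pow_dvd_leq leB_N _; apply: (det_row_pow_dvd (i0 := j0)) => k.
  by rewrite mxE fj0 mxE; exists (u j0 0 k).
have /fin_all_exists [h defh] : forall j, exists t, f j = Some t.
  by move=> j; move: (f_some j); case: (f j) => // t _; exists t.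
have rowX j k : (\matrix_j X j (f j)) j k = E (h j) 0 k by rewrite mxE defh.
case: (boolP (injectiveb h)) => [/injectiveP h_inj | /injectivePn [j1 [j2 ne_j12 eq_h12]]].
  apply: (@pow_dvd_leq _ _ _ (\sum_j w (h j))).
    exact: leq_trans leB_w (sum_nondecreasing_inj w_nondecr (inj_comp val_inj h_inj)).
  by apply: det_rows_pow_dvd => j k; rewrite rowX.
by rewrite (determinant_alternate ne_j12) => [|k]; [apply: pow_dvd0 | rewrite !rowX eq_h12].
Qed.

End Determinants.

Section Ideals.
Variable T : comNzRingType.
Implicit Types I J : T -> Prop.

Lemma ideal_mul_mem I J a b : I a -> J b -> ideal_mul I J (a * b).
Proof. by move=> Ia Jb; exists 1%N, (fun=> a), (fun=> b); rewrite big_ord1. Qed.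

Lemma ideal_mulD I J x y : ideal_mul I J x -> ideal_mul I J y -> ideal_mul I J (x + y).
Proof.
move=> [k [a [b [Ia Jb ->]]]] [l [a' [b' [Ia' Jb' ->]]]].
pose glue (U : Type) (v : 'I_k -> U) (v' : 'I_l -> U) i :=
  match split i with inl i1 => v i1 | inr i2 => v' i2 end.
exists (k + l)%N, (glue _ a a'), (glue _ b b'); split.
- by move=> i; rewrite /glue; case: split.
- by move=> i; rewrite /glue; case: split.
by rewrite big_split_ord /glue; congr (_ + _); apply: eq_bigr => i _;
  rewrite ?(split_lshift, split_rshift) (unsplitK (inl i), unsplitK (inr i)).
Qed.

Lemma ideal_pow0 I k : ideal_pow I k 0.
Proof.
case: k => //= k; exists 0%N, (fun=> 0), (fun=> 0).
by split=> [[]|[]|]; rewrite ?big_ord0.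
Qed.

Lemma ideal_powD I k x y : ideal_pow I k x -> ideal_pow I k y -> ideal_pow I k (x + y).
Proof. by case: k => //= k; apply: ideal_mulD. Qed.

Lemma ideal_pow_sum I k (U : Type) (r : seq U) (P : pred U) (F : U -> T) :
  (forall i, P i -> ideal_pow I k (F i)) -> ideal_pow I k (\sum_(i <- r | P i) F i).
Proof. by move=> IF; apply: big_ind => //; [exact: ideal_pow0 | exact: ideal_powD]. Qed.

Lemma ideal_powMl I k a x : is_ideal I -> ideal_pow I k x -> ideal_pow I k (a * x).
Proof.
case: k => //= k [_ _ IM] [l [b [c [Ib Jc ->]]]].
exists l, (fun i => a * b i), c; split=> //; first by move=> i; apply: IM.
by rewrite mulr_sumr; apply: eq_bigr => i _; rewrite mulrA.
Qed.

Lemma ideal_pow_exp I k x : I x -> ideal_pow I k (x ^+ k).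
Proof. by move=> Ix; elim: k => //= k IH; rewrite exprS; apply: ideal_mul_mem. Qed.

Lemma maximal_ideal_preim (S : comNzRingType) (f : {rmorphism T -> S}) (M : S -> Prop) :
  (forall y, exists x, f x = y) -> is_maximal_ideal M -> is_maximal_ideal (fun x => M (f x)).
Proof.
move=> f_surj [[M0 MD MM] M1 M_max]; split.
- split=> [|x y Mx My|a x Mx]; rewrite ?rmorph0 ?rmorphD ?rmorphM //.
  + exact: MD.
  + exact: MM.
- by rewrite rmorph1.
move=> J [J0 JD JM] J1 MJ x Jx.
pose fJ y := exists x, J x /\ f x = y.
have fJ_ideal : is_ideal fJ.
  split=> [|_ _ [x1 [Jx1 <-]] [x2 [Jx2 <-]]|a _ [x1 [Jx1 <-]]].
  - by exists 0; rewrite rmorph0.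
  - by exists (x1 + x2); rewrite rmorphD; split=> //; apply: JD.
  - have [a' <-] := f_surj a.
    by exists (a' * x1); rewrite rmorphM; split=> //; apply: JM.
have fJ1 : ~ fJ 1.
  move=> [y [Jy fy]]; apply: J1.
  have J_y1 : J (y - 1) by apply: MJ; rewrite rmorphB rmorph1 fy subrr.
  by rewrite -[1](addrNK y) -opprB -mulN1r; apply: JD => //; apply: JM.
apply: (M_max fJ fJ_ideal fJ1); last by exists x.
by move=> y My; have [x' fx'] := f_surj y; exists x'; split=> //; apply: MJ; rewrite fx'.
Qed.

Lemma maximal_ideal_ker (F : fieldType) (g : {rmorphism T -> F}) :
  (forall y, exists x, g x = y) -> is_maximal_ideal (fun x => g x = 0).
Proof.
move=> g_surj; split.
- split=> [|x y gx gy|a x gx]; by rewrite ?rmorph0 ?rmorphD ?rmorphM ?gx ?gy ?addr0 ?mulr0.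
- by rewrite rmorph1; apply/eqP; rewrite oner_eq0.
move=> J [_ JD JM] J1 kerJ x Jx; case: (eqVneq (g x) 0) => // gx_neq0; exfalso.
have [y gy] := g_surj (g x)^-1.
have J_1yx : J (1 - y * x) by apply: kerJ; rewrite rmorphB rmorph1 rmorphM gy mulVf ?subrr.
by apply: J1; rewrite -(subrK (y * x) 1); apply: JD => //; apply: JM.
Qed.

Lemma local_maximal_idealE (M1 M2 : T -> Prop) : is_local_ring T ->
  is_maximal_ideal M1 -> is_maximal_ideal M2 -> forall x, M1 x <-> M2 x.
Proof. by move=> [M [_ M_uniq]] M1_max M2_max x; rewrite (M_uniq _ M1_max) (M_uniq _ M2_max). Qed.

Lemma ideal_pow_lift (S : comNzRingType) (f : {rmorphism T -> S}) (J : S -> Prop) k y :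
  (forall y, exists x, f x = y) -> ideal_pow J k y ->
  exists x, f x = y /\ ideal_pow (fun x => J (f x)) k x.
Proof.
move=> f_surj; elim: k y => [|k IH] y /=; first by have [x fx] := f_surj y; exists x.
move=> [l [a [b [Ja Jb ->]]]].
have [a' fa'] := choice (fun i => f_surj (a i)).
have [b' fb'] := choice (fun i => IH _ (Jb i)).
exists (\sum_(i < l) a' i * b' i); split.
  by rewrite rmorph_sum; apply: eq_bigr => i _; rewrite rmorphM fa' (proj1 (fb' i)).
by exists l, a', b'; split=> [i|i|//]; [rewrite fa' | exact: (proj2 (fb' i))].
Qed.

Lemma rmorph_ideal_pow_dvd (S : comNzRingType) (g : {rmorphism T -> S}) (q : S) I k x :
  (forall y, I y -> pow_dvd q 1 (g y)) -> ideal_pow I k x -> pow_dvd q k (g x).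
Proof.
move=> gI; elim: k x => [|k IH] x /=; first by exists (g x); rewrite mul1r.
move=> [l [a [b [Ia Jb ->]]]]; rewrite rmorph_sum; apply: pow_dvd_sum => i _.
by rewrite rmorphM -add1n; apply: pow_dvdM; [apply: gI | apply: IH].
Qed.

End Ideals.

Section FlattenedBasis.
Variables (T : comNzRingType) (m : T -> Prop) (dims : nat -> nat) (N : nat).

Definition offset k := (\sum_(j < k) dims j)%N.

Definition degree t := (\sum_(0 <= k < N) (offset k.+1 <= t))%N.

Lemma offsetS k : offset k.+1 = (offset k + dims k)%N.
Proof. exact: big_ord_recr. Qed.

Lemma offset_nondecr : {homo offset : a b / (a <= b)%N}.
Proof. by apply: homo_leq => [//|? ? ?|k]; [apply: leq_trans | rewrite offsetS leq_addr]. Qed.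

Lemma degree_nondecr : {homo degree : a b / (a <= b)%N}.
Proof.
move=> a b le_ab; apply: leq_sum => k _.
by case: (leqP (offset k.+1) a) => // /leq_trans /(_ le_ab) ->.
Qed.

Lemma degree_block k t : (k < N)%N -> (offset k <= t < offset k.+1)%N -> degree t = k.
Proof.
move=> lt_kN /andP[ge_t lt_t].
rewrite /degree (big_cat_nat (leq0n k) (ltnW lt_kN)) /=.
rewrite (eq_big_nat _ _ (F2 := fun=> 1%N)) => [|j /andP[_ lt_jk]]; last first.
  by rewrite (leq_trans (offset_nondecr lt_jk) ge_t).
rewrite [X in (_ + X)%N](eq_big_nat _ _ (F2 := fun=> 0%N)) => [|j /andP[le_kj _]].
  by rewrite !sum_nat_const_nat muln0 subn0 muln1 addn0.
by rewrite leqNgt (leq_trans lt_t) // offset_nondecr.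
Qed.

Lemma degree_nth_term t k : (k < N)%N -> is_nth_term dims t.+1 k -> degree t = k.
Proof. exact: degree_block. Qed.

Variable x : nat -> nat -> T.

Definition flat_basis t := x (degree t) (t - offset (degree t)).

Lemma flat_block k i : (k < N)%N -> (i < dims k)%N -> flat_basis (offset k + i) = x k i.
Proof.
move=> lt_kN lt_i; rewrite /flat_basis (degree_block lt_kN) ?addKn //.
by rewrite leq_addr offsetS ltn_add2l.
Qed.

Hypothesis x_mem : forall k i, ideal_pow m k (x k i).

Hypothesis x_basis : forall k, graded_basis m k (fun i : 'I_(dims k) => x k i).
Hypothesis residue_nat : forall a : T, exists c : nat, m (a - c%:R).

Lemma flat_span_mod_pow K z : (K <= N)%N ->
  exists c : nat -> nat, ideal_pow m K (z - \sum_(t < offset K) (c t)%:R * flat_basis t).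
Proof.
elim: K => [_|K IH lt_KN]; first by exists (fun=> 0%N).
have [c Kz] := IH (ltnW lt_KN); set y := z - _ in Kz.
have [_ x_span _] := x_basis K; have [a Ky] := x_span y Kz.
have [d dP] := choice (fun i : 'I_(dims K) => residue_nat (a i)).
pose c' t := if (t < offset K)%N then c t else odflt 0%N (omap d (insub (t - offset K)%N)).
exists c'; rewrite offsetS big_split_ord /=.
have -> : \sum_(t < offset K) (c' (lshift (dims K) t))%:R * flat_basis (lshift (dims K) t) =
          \sum_(t < offset K) (c t)%:R * flat_basis t.
  by apply: eq_bigr => t _; rewrite /c' /= ltn_ord.
have -> : \sum_(i < dims K) (c' (rshift (offset K) i))%:R * flat_basis (rshift (offset K) i) =
          \sum_(i < dims K) (d i)%:R * x K i.
  apply: eq_bigr => i _; rewrite /c' /= ltnNge leq_addr /= addKn valK /=.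
  by rewrite flat_block.
have -> : z - (\sum_(t < offset K) (c t)%:R * flat_basis t + \sum_(i < dims K) (d i)%:R * x K i) =
          (y - \sum_(i < dims K) a i * x K i) + \sum_(i < dims K) (a i - (d i)%:R) * x K i.
  by rewrite /y (eq_bigr _ (fun i _ => mulrBl _ _ _)) sumrB addrA subrK opprD addrA.
apply: (@ideal_powD _ _ K.+1) => //; apply: ideal_pow_sum => i _.
by apply: ideal_mul_mem; [exact: dP | exact: x_mem].
Qed.

End FlattenedBasis.

Lemma graded_bases_padded (T : comNzRingType) (m : T -> Prop) (dims : nat -> nat) :
    (forall k, graded_dim m k (dims k)) ->
  exists x : nat -> nat -> T, (forall k, graded_basis m k (fun i : 'I_(dims k) => x k i)) /\
    (forall k i, ideal_pow m k (x k i)).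
Proof.
move=> dimsP.
suff /choice [x xP] : forall k, exists f : nat -> T,
    graded_basis m k (fun i : 'I_(dims k) => f i) /\ forall i, ideal_pow m k (f i).
  by exists x; split=> k; case: (xP k).
move=> k; have [b bP] := dimsP k; exists (fun i => if insub i is Some i' then b i' else 0); split.
  by under [fun i => _]funext => i do rewrite valK.
by move=> i; case: insubP => [i' _ _ | _]; [case: bP | apply: ideal_pow0].
Qed.

Section LocalRingOverZp.
Variable p : nat.
Hypothesis p_prime : prime p.
Local Notation Zp := (Zpadic p).
Variables (R A : comNzRingType) (pi : {rmorphism R -> A}) (m : A -> Prop).
Hypothesis R_local : is_local_ring R.
Hypothesis pi_surj : forall a : A, exists r : R, pi r = a.
Hypothesis pi_ker : forall r : R, pi r = 0 <-> exists t : R, r = p%:R * t.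
Hypothesis m_max : is_maximal_ideal m.

Let M (x : R) := m (pi x).

Let M_maximal : is_maximal_ideal M.
Proof. exact: maximal_ideal_preim. Qed.

Let M_ideal : is_ideal M.
Proof. by case: M_maximal. Qed.

Let p_in_M : M p%:R.
Proof.
have pi_p : pi p%:R = 0 by apply/pi_ker; exists 1; rewrite mulr1.
by rewrite /M pi_p; case: m_max => -[].
Qed.

Lemma M_residueE (phi : {rmorphism R -> Zp}) x : M x <-> zp_residue (phi x) = 0.
Proof.
have residue_surj (y : 'F_p) : exists z : R, (@zp_residue p \o phi) z = y.
  (* the morphism structure of [zp_residue] is built under [prime p] *)
  by exists (y : nat)%:R; rewrite /= !rmorph_nat; [apply: natr_Zp | apply: p_prime].
exact: (local_maximal_idealE R_local M_maximal (maximal_ideal_ker residue_surj)).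
Qed.

Lemma rmorph_M_pow_dvd (phi : {rmorphism R -> Zp}) k x :
  ideal_pow M k x -> pow_dvd (p%:R : Zp) k (phi x).
Proof.
apply: rmorph_ideal_pow_dvd => y /(M_residueE phi) /(zp_residue_eq0 p_prime) [c ->].
by exists c; rewrite expr1.
Qed.

Lemma residue_nat_of_rmorph (phi : {rmorphism R -> Zp}) (a : A) : exists c : nat, m (a - c%:R).
Proof.
have [x <-] := pi_surj a; exists (zp_residue (phi x) : nat).
have : M (x - (zp_residue (phi x) : nat)%:R).
  by apply/(M_residueE phi); rewrite !rmorphB !rmorph_nat natr_Zp subrr.
by rewrite /M rmorphB rmorph_nat.
Qed.

Variables (dims : nat -> nat) (N : nat) (x : nat -> nat -> A) (e : nat -> R).
Variable phi0 : {rmorphism R -> Zp}.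
Hypothesis x_basis : forall k, graded_basis m k (fun i : 'I_(dims k) => x k i).
Hypothesis x_mem : forall k i, ideal_pow m k (x k i).
Hypothesis e_lift : forall t, pi (e t) = flat_basis dims N x t.
Hypothesis e_mem : forall t, ideal_pow M (degree dims N t) (e t).

Local Notation D := (offset dims N).

Lemma lift_span_mod_pow_p r :
  exists (c : nat -> nat) r', ideal_pow M N (r - \sum_(t < D) (c t)%:R * e t - p%:R * r').
Proof.
have [c mN] := flat_span_mod_pow x_mem x_basis (residue_nat_of_rmorph phi0) (pi r) (leqnn N).
have [y [pi_y My]] := ideal_pow_lift pi_surj mN.
have : pi (r - \sum_(t < D) (c t)%:R * e t - y) = 0.
  rewrite !rmorphB pi_y rmorph_sum.
  by under eq_bigr do rewrite rmorphM rmorph_nat e_lift; rewrite subrr.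
by move=> /pi_ker [r' def_r']; exists c, r'; rewrite -def_r' opprB addrC subrK.
Qed.

(* Decomposing the error term [p * r'] again [a] times pushes it into [p^a R]. *)
Lemma lift_span_mod_pow r :
  exists c : nat -> nat, ideal_pow M N (r - \sum_(t < D) (c t)%:R * e t).
Proof.
have iter a : exists (c : nat -> nat) r',
    ideal_pow M N (r - \sum_(t < D) (c t)%:R * e t - p%:R ^+ a * r').
  elim: a => [|a [c [r1 Mr1]]].
    exists (fun=> 0%N), r; rewrite big1 => [|t _]; last exact: mul0r.
    by rewrite subr0 expr0 mul1r subrr; apply: ideal_pow0.
  have [c' [r2 Mr2]] := lift_span_mod_pow_p r1.
  exists (fun t => c t + p ^ a * c' t)%N, r2.
  pose S := \sum_(t < D) (c t)%:R * e t.
  pose S' := \sum_(t < D) (c' t)%:R * e t.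
  have -> : \sum_(t < D) (c t + p ^ a * c' t)%N%:R * e t = S + p%:R ^+ a * S'.
    rewrite mulr_sumr -big_split; apply: eq_bigr => t _.
    by rewrite natrD natrM natrX mulrDl mulrA.
  have -> : r - (S + p%:R ^+ a * S') - p%:R ^+ a.+1 * r2 =
      (r - S - p%:R ^+ a * r1) + p%:R ^+ a * (r1 - S' - p%:R * r2) by rewrite exprSr; ring.
  by apply: ideal_powD => //; apply: ideal_powMl.
have [c [r' Mr']] := iter N; exists c.
set S := \sum_(t < _) _ in Mr' *.
have -> : r - S = (r - S - p%:R ^+ N * r') + r' * p%:R ^+ N by ring.
by apply: ideal_powD => //; apply: ideal_powMl => //; apply: ideal_pow_exp.
Qed.

Lemma det_rmorph_pow_dvd (s B : nat) (phi : 'I_s -> {rmorphism R -> Zp}) (r : 'I_s -> R) :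
  (B <= \sum_(t < s) degree dims N t)%N -> (B <= N)%N ->
  pow_dvd (p%:R : Zp) B (\det (\matrix_(i, j) phi i (r j))).
Proof.
move=> leB_deg leB_N.
pose E (t : 'I_D) := \row_i phi i (e t).
have col j : exists g : 'I_D -> Zp, exists u : 'rV_s,
    \row_i phi i (r j) = \sum_t g t *: E t + (p%:R : Zp) ^+ N *: u.
  have [c /(fun Mr i => rmorph_M_pow_dvd (phi i) Mr) /fin_all_exists [v dv]] :=
    lift_span_mod_pow (r j).
  exists (fun t => (c t)%:R), (\row_i v i); apply/rowP => i.
  rewrite !mxE summxE -dv rmorphB rmorph_sum addrC.
  rewrite [X in _ + X](eq_bigr (fun t : 'I_D => phi i ((c t)%:R * e t))) ?subrK //.
  move=> t _.
  by rewrite !mxE rmorphM rmorph_nat.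
have /fin_all_exists [g /fin_all_exists [u def_col]] := col.
rewrite -det_tr.
have -> : (\matrix_(i, j) phi i (r j))^T =
    \matrix_j (\sum_t g j t *: E t + (p%:R : Zp) ^+ N *: u j).
  by apply/row_matrixP => j; rewrite rowK -def_col; apply/rowP => i; rewrite !mxE.
apply: (det_span_pow_dvd g u (degree_nondecr dims N) _ leB_deg leB_N) => t j.
by rewrite mxE; apply: rmorph_M_pow_dvd.
Qed.

End LocalRingOverZp.

Theorem lemma2p4
  (p : nat) (p_prime : prime p)
  (* R : commutative noetherian local ring containing Z_p as a subring *)
  (R : comNzRingType) (R_noeth : is_noetherian R) (R_local : is_local_ring R)
  (iota : {rmorphism Zpadic p -> R}) (iota_inj : injective iota)
  (* A = R/pR, given by a surjective ring map pi : R -> A with kernel pR *)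
  (A : comNzRingType) (pi : {rmorphism R -> A})
  (pi_surj : forall a : A, exists r : R, pi r = a)
  (pi_ker : forall r : R, pi r = 0 <-> exists t : R, r = p%:R * t)
  (* m : the maximal ideal of A *)
  (m : A -> Prop) (m_max : is_maximal_ideal m)
  (* dims k = dim_{A/m} m^k/m^(k+1) *)
  (dims : nat -> nat) (dims_spec : forall k, graded_dim m k (dims k))
  (s : nat)
  (* n i = n_i(A) for 1 <= i <= s *)
  (n : nat -> nat) (n_spec : forall i, (0 < i <= s)%N -> is_nth_term dims i (n i))
  (r : 'I_s -> R) (phi : 'I_s -> {rmorphism R -> Zpadic p}) :
  exists c : Zpadic p,
    \det (\matrix_(i < s, j < s) phi i (r j))
      = (p%:R : Zpadic p) ^+ (\sum_(i < s) n i.+1) * c.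
Proof.
case: (posnP s) => [s0 | s_gt0].
  by subst s; exists 1; rewrite det_mx00 big_ord0 expr0 mulr1.
set B := (\sum_(i < s) n i.+1)%N.
have [x [x_basis x_mem]] := graded_bases_padded dims_spec.
have /choice [e e_lift] : forall t, exists e, pi e = flat_basis dims B.+1 x t /\
    ideal_pow (fun y => m (pi y)) (degree dims B.+1 t) e.
  by move=> t; apply: ideal_pow_lift pi_surj (x_mem _ _).
have leB_deg : (B <= \sum_(t < s) degree dims B.+1 t)%N.
  apply: leq_sum => t _; rewrite (degree_nth_term _ (n_spec t.+1 _)) ?ltn_ord //.
  by rewrite ltnS /B (bigD1 t) //= leq_addr.
apply: (det_rmorph_pow_dvd (e := e) p_prime R_local pi_surj pi_ker m_max (phi (Ordinal s_gt0))
  x_basis x_mem _ _ phi r leB_deg (leqnSn B)) => t; by have [] := e_lift t.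
Qed.
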